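(* Let $G=\langle c,q\mid c(qcq^{-1})=(qcq^{-1})c\rangle$. Then \[C_G(qcq^{-1})=\langle c,\ qcq^{-1},\ q^2cq^{-2}\rangle.\]
   Context: $C_G(g)=\{h\in G\mid gh=hg\}$ denotes the centraliser of $g$ in $G$. *)

(* The group G = < c, q | c (q c q^-1) = (q c q^-1) c > is
   modelled by its presentation: elements are words in c^{+-1}, q^{+-1}, and
   two words represent the same element of G iff they are related by the
   congruence generated by free cancellation and the defining relator. *)
From Stdlib Require Import List.
Import ListNotations.

Inductive gen : Type := Gc | Gq.

(* a letter: a generator together with an exponent sign (true = inverse) *)
Definition letter : Type := (gen * bool)%type.
Definition word : Type := list letter.

Definition linv (x : letter) : letter := (fst x, negb (snd x)).
Definition winv (w : word) : word := rev (map linv w).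

Definition wc : word := [(Gc, false)].
Definition wq : word := [(Gq, false)].
Definition wqi : word := [(Gq, true)].

Definition wc1 : word := wq ++ wc ++ wqi.
Definition wc2 : word := wq ++ wq ++ wc ++ wqi ++ wqi.

Definition relator : word := wc ++ wc1 ++ winv wc ++ winv wc1.

Inductive eqG : word -> word -> Prop :=
| eqG_refl w : eqG w w
| eqG_sym u v : eqG u v -> eqG v u
| eqG_trans u v w : eqG u v -> eqG v w -> eqG u w
| eqG_cancel u v x : eqG (u ++ [x; linv x] ++ v) (u ++ v)
| eqG_rel u v : eqG (u ++ relator ++ v) (u ++ v).

Inductive gen_by (S : list word) : word -> Prop :=
| gen_by_nil : gen_by S []
| gen_by_cons s w : In s S -> gen_by S w -> gen_by S (s ++ w)
| gen_by_consinv s w : In s S -> gen_by S w -> gen_by S (winv s ++ w).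

Definition in_subgroup (S : list word) (g : word) : Prop :=
  exists u, gen_by S u /\ eqG g u.

Definition in_centraliser (h g : word) : Prop := eqG (g ++ h) (h ++ g).

(* G is the HNN extension of A = <c, d | [c, d]> = Z^2 with stable letter q
   conjugating <c> onto <d>, where d = q c q^-1.  Its elements have unique
   normal forms (Britton), obtained here by van der Waerden's trick: words act
   from the right on reduced normal forms, the action respects free cancellation
   and the relator (c and d merely translate the A-part), and reading a normal
   form back as a word inverts it, so two words are equal in G iff they have the
   same normal form.

   Left multiplication by d commutes with this action and pushes d through the
   syllables of g from left to right: d crosses c^m q and comes out as c, c
   crosses d^m q^-1 and comes out as d, and either is absorbed by a syllable of
   its own kind.  So d g = g d forces d to cross all of g and come out as d, and
   following the syllables it crosses writes g as a product of powers of c, d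
   and q d q^-1 = q^2 c q^-2. *)

From Stdlib Require Import List ZArith Lia Setoid Morphisms.
Import ListNotations.
Open Scope Z_scope.

(** * Words modulo the relations of G *)

#[local] Instance eqG_Equivalence : Equivalence eqG.
Proof. split; [exact eqG_refl | exact eqG_sym | exact eqG_trans]. Qed.

Lemma eqG_app_l w u v : eqG u v -> eqG (w ++ u) (w ++ v).
Proof.
  induction 1 as [| | | u v x | u v].
  - reflexivity.
  - now symmetry.
  - etransitivity; eassumption.
  - rewrite !app_assoc, <- (app_assoc (w ++ u)). apply eqG_cancel.
  - rewrite !app_assoc, <- (app_assoc (w ++ u)). apply eqG_rel.
Qed.

Lemma eqG_app_r w u v : eqG u v -> eqG (u ++ w) (v ++ w).
Proof.
  induction 1 as [| | | u v x | u v].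
  - reflexivity.
  - now symmetry.
  - etransitivity; eassumption.
  - rewrite <- !app_assoc. apply (eqG_cancel u (v ++ w) x).
  - rewrite <- !app_assoc. apply eqG_rel.
Qed.

#[local] Instance app_eqG_Proper : Proper (eqG ==> eqG ==> eqG) (@app letter).
Proof.
  intros u u' Hu v v' Hv. transitivity (u' ++ v).
  - now apply eqG_app_r.
  - now apply eqG_app_l.
Qed.

Lemma linv_involutive x : linv (linv x) = x.
Proof. destruct x as [g b]. unfold linv. cbn. now rewrite Bool.negb_involutive. Qed.

Lemma winv_app u v : winv (u ++ v) = winv v ++ winv u.
Proof. unfold winv. now rewrite map_app, rev_app_distr. Qed.

Lemma winv_involutive w : winv (winv w) = w.
Proof.
  unfold winv. rewrite map_rev, rev_involutive, map_map.
  induction w as [|x w IH]; cbn; [reflexivity|]. now rewrite linv_involutive, IH.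
Qed.

Lemma winv_cancel_r w : eqG (w ++ winv w) [].
Proof.
  induction w as [|x w IH]; [reflexivity|].
  change (eqG ([x] ++ w ++ winv w ++ [linv x]) []).
  rewrite (app_assoc w), IH. exact (eqG_cancel [] [] x).
Qed.

Lemma winv_cancel_l w : eqG (winv w ++ w) [].
Proof. rewrite <- (winv_involutive w) at 2. apply winv_cancel_r. Qed.

Lemma winv_cancel_l_app w r : eqG (winv w ++ w ++ r) r.
Proof. now rewrite app_assoc, winv_cancel_l. Qed.

Fixpoint wpow (w : word) (n : nat) : word :=
  match n with O => [] | S n => w ++ wpow w n end.

Definition zpow (w : word) (m : Z) : word :=
  if 0 <=? m then wpow w (Z.to_nat m) else wpow (winv w) (Z.to_nat (- m)).

Lemma wpow_succ_r w n : wpow w (S n) = wpow w n ++ w.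
Proof.
  induction n as [|n IH]; cbn; [now rewrite app_nil_r|].
  cbn in IH. now rewrite <- app_assoc, <- IH.
Qed.

Lemma zpow_succ w m : eqG (zpow w (m + 1)) (zpow w m ++ w).
Proof.
  unfold zpow. destruct (Z.leb_spec 0 m), (Z.leb_spec 0 (m + 1)); try lia.
  - replace (Z.to_nat (m + 1)) with (S (Z.to_nat m)) by lia.
    now rewrite wpow_succ_r.
  - replace (Z.to_nat (m + 1)) with 0%nat by lia.
    replace (Z.to_nat (- m)) with 1%nat by lia.
    cbn. now rewrite app_nil_r, winv_cancel_l.
  - replace (Z.to_nat (- m)) with (S (Z.to_nat (- (m + 1)))) by lia.
    now rewrite wpow_succ_r, <- app_assoc, winv_cancel_l, app_nil_r.
Qed.

Lemma zpow_pred w m : eqG (zpow w (m - 1)) (zpow w m ++ winv w).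
Proof.
  rewrite <- (Z.sub_add 1 m) at 2.
  now rewrite zpow_succ, <- app_assoc, winv_cancel_r, app_nil_r.
Qed.

Lemma wpow_conj t x n : eqG (wpow (t ++ x ++ winv t) n) (t ++ wpow x n ++ winv t).
Proof.
  induction n as [|n IH]; cbn; [now rewrite winv_cancel_r|].
  rewrite IH, <- !app_assoc. now rewrite winv_cancel_l_app.
Qed.

Lemma zpow_conj t x m : eqG (zpow (t ++ x ++ winv t) m) (t ++ zpow x m ++ winv t).
Proof.
  unfold zpow. destruct (0 <=? m); [apply wpow_conj|].
  rewrite !winv_app, winv_involutive, <- app_assoc. apply wpow_conj.
Qed.

Definition comm (x y : word) : Prop := eqG (x ++ y) (y ++ x).

Lemma comm_sym x y : comm x y -> comm y x.
Proof. unfold comm. now symmetry. Qed.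

Lemma comm_winv x y : comm x y -> comm (winv x) y.
Proof.
  unfold comm. intros Hxy.
  transitivity (winv x ++ (y ++ x) ++ winv x).
  - now rewrite <- (app_assoc y x), winv_cancel_r, app_nil_r.
  - now rewrite <- Hxy, <- app_assoc, winv_cancel_l_app.
Qed.

Lemma comm_app x1 x2 y : comm x1 y -> comm x2 y -> comm (x1 ++ x2) y.
Proof.
  unfold comm. intros H1 H2.
  now rewrite <- app_assoc, H2, app_assoc, H1, app_assoc.
Qed.

Lemma comm_wpow x y n : comm x y -> comm (wpow x n) y.
Proof.
  intros Hxy. induction n as [|n IH]; cbn.
  - unfold comm. now rewrite app_nil_r.
  - now apply comm_app.
Qed.

Lemma comm_zpow x y m : comm x y -> comm (zpow x m) y.
Proof.
  intros Hxy. unfold zpow.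
  destruct (0 <=? m); apply comm_wpow; [|apply comm_winv]; exact Hxy.
Qed.

Definition cpow (m : Z) : word := zpow wc m.
Definition dpow (m : Z) : word := zpow wc1 m.

Lemma comm_c_d : comm wc wc1.
Proof.
  unfold comm. rewrite <- (app_nil_l (wc1 ++ wc)), <- (eqG_rel [] []).
  unfold relator. rewrite <- !app_assoc, !app_nil_l, winv_cancel_l_app.
  now rewrite winv_cancel_l, app_nil_r.
Qed.

Lemma comm_c_dpow b : comm wc (dpow b).
Proof. apply comm_sym, comm_zpow, comm_sym, comm_c_d. Qed.

Lemma cpow_0 : cpow 0 = [].
Proof. reflexivity. Qed.

Lemma dpow_0 : dpow 0 = [].
Proof. reflexivity. Qed.

Lemma comm_cpow_dpow a b : comm (cpow a) (dpow b).
Proof. apply comm_zpow, comm_c_dpow. Qed.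

Lemma dpow_conj b : eqG (dpow b) (wq ++ cpow b ++ wqi).
Proof. exact (zpow_conj wq wc b). Qed.

Lemma dpow_q b : eqG (dpow b ++ wq) (wq ++ cpow b).
Proof.
  rewrite dpow_conj, <- !app_assoc.
  now rewrite (winv_cancel_l_app wq []), app_nil_r.
Qed.

Lemma cpow_qi a : eqG (cpow a ++ wqi) (wqi ++ dpow a).
Proof. rewrite dpow_conj. symmetry. exact (winv_cancel_l_app wq (cpow a ++ wqi)). Qed.

(** * Normal forms *)

(* A normal form [(a, b, l)] with [l = [s_1; ...; s_k]] stands for
   s_k ... s_1 c^a d^b, where the syllable [(m, false)] is c^m q and [(m, true)]
   is d^m q^-1. *)
Definition syllable : Type := (Z * bool)%type.
Definition nform : Type := (Z * Z * list syllable)%type.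

Definition word_of_syllable (x : syllable) : word :=
  let '(m, s) := x in if s then dpow m ++ wqi else cpow m ++ wq.

Fixpoint word_of_syllables (l : list syllable) : word :=
  match l with
  | [] => []
  | x :: t => word_of_syllables t ++ word_of_syllable x
  end.

Definition word_of_nf (s : nform) : word :=
  let '(a, b, l) := s in word_of_syllables l ++ cpow a ++ dpow b.

(* A zero syllable after one of the other kind would contain q q^-1 or q^-1 q. *)
Fixpoint reduced (l : list syllable) : Prop :=
  match l with
  | (m1, s1) :: ((m2, s2) :: _) as t => (m1 <> 0 \/ s1 = s2) /\ reduced t
  | _ => True
  end.

(* Right multiplication by a letter, using d^b q = q c^b and c^a q^-1 = q^-1 d^a;
   the pinches d^m q^-1 q = d^m and c^m q q^-1 = c^m are cancelled on the spot. *)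
Definition nf_step (s : nform) (x : letter) : nform :=
  let '(a, b, l) := s in
  match x with
  | (Gc, false) => (a + 1, b, l)
  | (Gc, true) => (a - 1, b, l)
  | (Gq, false) =>
      match l with
      | (m, true) :: t => if a =? 0 then (b, m, t) else (b, 0, (a, false) :: l)
      | _ => (b, 0, (a, false) :: l)
      end
  | (Gq, true) =>
      match l with
      | (m, false) :: t => if b =? 0 then (m, a, t) else (0, a, (b, true) :: l)
      | _ => (0, a, (b, true) :: l)
      end
  end.

Definition nf_steps (s : nform) (w : word) : nform := fold_left nf_step w s.

Definition normal_form (w : word) : nform := nf_steps (0, 0, []) w.

Lemma reduced_cons2 m1 s1 m2 s2 t :
  reduced ((m1, s1) :: (m2, s2) :: t) = ((m1 <> 0 \/ s1 = s2) /\ reduced ((m2, s2) :: t)).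
Proof. reflexivity. Qed.

Lemma reduced_tail x t : reduced (x :: t) -> reduced t.
Proof. destruct x, t as [|[]]; cbn; tauto. Qed.

Lemma reduced_one x : reduced [x].
Proof. now destruct x. Qed.

Arguments reduced : simpl never.

Ltac case_eqb :=
  repeat match goal with |- context [?x =? ?y] => destruct (Z.eqb_spec x y) end.

Lemma nf_step_reduced s x : reduced (snd s) -> reduced (snd (nf_step s x)).
Proof.
  destruct s as [[a b] l], x as [[|] [|]]; cbn [snd]; intros Hl; try exact Hl;
    destruct l as [|[m [|]] t]; cbn [nf_step snd]; case_eqb; cbn [snd];
    try apply reduced_one; try (now apply reduced_tail in Hl);
    rewrite reduced_cons2; tauto.
Qed.

Lemma nf_steps_reduced s w : reduced (snd s) -> reduced (snd (nf_steps s w)).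
Proof.
  revert s. induction w as [|x w IH]; intros s Hs; [exact Hs|].
  apply IH, nf_step_reduced, Hs.
Qed.

Lemma nf_steps_app s u v : nf_steps s (u ++ v) = nf_steps (nf_steps s u) v.
Proof. apply fold_left_app. Qed.

Lemma nf_step_cancel s x : reduced (snd s) -> nf_step (nf_step s x) (linv x) = s.
Proof.
  destruct s as [[a b] l], x as [[|] [|]]; cbn [snd]; intros Hl;
    cbn [nf_step linv fst snd negb].
  1: now rewrite Z.sub_add.
  1: now rewrite Z.add_simpl_r.
  (* a second pinch right after the first one would contradict reducedness *)
  all: destruct l as [|[m [|]] t]; cbn; case_eqb; cbn; case_eqb; try reflexivity;
    subst; destruct t as [|[m' [|]] t]; try reflexivity;
    rewrite reduced_cons2 in Hl; intuition congruence.
Qed.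

Lemma nf_steps_app_winv s w : reduced (snd s) -> nf_steps s (w ++ winv w) = s.
Proof.
  revert s. induction w as [|x w IH]; intros s Hs; [reflexivity|].
  change ((x :: w) ++ winv (x :: w)) with ([x] ++ w ++ winv w ++ [linv x]).
  rewrite (app_assoc w), (nf_steps_app s [x]), nf_steps_app, IH
    by now apply nf_steps_reduced.
  now apply nf_step_cancel.
Qed.

Lemma nf_steps_wc1 a b l : reduced l -> nf_steps (a, b, l) wc1 = (a, b + 1, l).
Proof.
  intros Hl. destruct l as [|[m [|]] t]; cbn; case_eqb; try reflexivity.
  subst. destruct t as [|[m' [|]] t]; cbn; case_eqb; try reflexivity.
  subst. rewrite reduced_cons2 in Hl. intuition congruence.
Qed.

Lemma nf_steps_winv_wc1 a b l : reduced l -> nf_steps (a, b, l) (winv wc1) = (a, b - 1, l).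
Proof.
  intros Hl. rewrite <- (nf_steps_app_winv (a, b - 1, l) wc1 Hl) at 1.
  now rewrite nf_steps_app, nf_steps_wc1, Z.sub_add.
Qed.

Lemma nf_steps_relator s : reduced (snd s) -> nf_steps s relator = s.
Proof.
  destruct s as [[a b] l]. cbn [snd]. intros Hl. unfold relator.
  rewrite !nf_steps_app.
  change (nf_steps (a, b, l) wc) with (a + 1, b, l).
  rewrite nf_steps_wc1 by exact Hl.
  change (nf_steps (a + 1, b + 1, l) (winv wc)) with (a + 1 - 1, b + 1, l).
  rewrite nf_steps_winv_wc1 by exact Hl.
  now rewrite !Z.add_simpl_r.
Qed.

Lemma nf_steps_eqG u v : eqG u v -> forall s, reduced (snd s) -> nf_steps s u = nf_steps s v.
Proof.
  induction 1 as [| u v _ IH | u v w _ IHuv _ IHvw | u v x | u v]; intros s Hs.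
  - reflexivity.
  - now rewrite IH.
  - now rewrite IHuv, IHvw.
  - rewrite !nf_steps_app. cbn [nf_steps fold_left].
    now rewrite nf_step_cancel by now apply nf_steps_reduced.
  - rewrite !nf_steps_app, nf_steps_relator by now apply nf_steps_reduced.
    reflexivity.
Qed.

Lemma word_of_nf_step s x : eqG (word_of_nf (nf_step s x)) (word_of_nf s ++ [x]).
Proof.
  destruct s as [[a b] l], x as [[|] [|]]; cbn [nf_step].
  - cbn [word_of_nf]. rewrite <- !app_assoc. apply eqG_app_l.
    unfold cpow at 1. rewrite zpow_pred, <- app_assoc. apply eqG_app_l.
    apply comm_winv, comm_c_dpow.
  - cbn [word_of_nf]. rewrite <- !app_assoc. apply eqG_app_l.
    unfold cpow at 1. rewrite zpow_succ, <- app_assoc. apply eqG_app_l.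
    apply comm_c_dpow.
  - assert (Hpush : eqG (word_of_nf (0, a, (b, true) :: l)) (word_of_nf (a, b, l) ++ wqi)).
    { cbn [word_of_nf word_of_syllables word_of_syllable].
      rewrite cpow_0, app_nil_l, <- !app_assoc. apply eqG_app_l.
      rewrite <- cpow_qi, !app_assoc. apply eqG_app_r, comm_sym, comm_cpow_dpow. }
    destruct l as [|[m [|]] t]; try exact Hpush.
    case_eqb; [|exact Hpush]. subst b.
    cbn [word_of_nf word_of_syllables word_of_syllable].
    rewrite dpow_0, app_nil_r, <- !app_assoc.
    apply eqG_app_l, eqG_app_l, dpow_conj.
  - assert (Hpush : eqG (word_of_nf (b, 0, (a, false) :: l)) (word_of_nf (a, b, l) ++ wq)).
    { cbn [word_of_nf word_of_syllables word_of_syllable].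
      rewrite dpow_0, <- !app_assoc, app_nil_r. apply eqG_app_l, eqG_app_l.
      symmetry. apply dpow_q. }
    destruct l as [|[m [|]] t]; try exact Hpush.
    case_eqb; [|exact Hpush]. subst a.
    cbn [word_of_nf word_of_syllables word_of_syllable].
    rewrite cpow_0, <- !app_assoc. apply eqG_app_l.
    change wqi with (winv wq). rewrite app_nil_l, dpow_q, winv_cancel_l_app.
    apply comm_cpow_dpow.
Qed.

Lemma normal_form_app u v : normal_form (u ++ v) = nf_steps (normal_form u) v.
Proof. apply nf_steps_app. Qed.

Lemma normal_form_reduced w : reduced (snd (normal_form w)).
Proof. now apply nf_steps_reduced. Qed.

Lemma word_of_normal_form w : eqG (word_of_nf (normal_form w)) w.
Proof.
  induction w as [|x w IH] using rev_ind; [reflexivity|].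
  rewrite normal_form_app. change (nf_steps (normal_form w) [x]) with (nf_step (normal_form w) x).
  rewrite word_of_nf_step, IH. reflexivity.
Qed.

Lemma eqG_iff_normal_form u v : eqG u v <-> normal_form u = normal_form v.
Proof.
  split; intros H.
  - now apply nf_steps_eqG.
  - now rewrite <- (word_of_normal_form u), <- (word_of_normal_form v), H.
Qed.

(** * Left multiplication by c and d *)

(* Left multiplication of the syllables by c ([false]) or d ([true]): the letter
   is absorbed by the first syllable of its own kind; before that it crosses the
   other syllables, using c d^m q^-1 = d^m q^-1 d and d c^m q = c^m q c.  The
   option is the letter that comes out on the right, if any. *)
Fixpoint lmul_syllables (y : bool) (l : list syllable) : list syllable * option bool :=
  match l with
  | [] => ([], Some y)
  | (m, s) :: t =>
      match lmul_syllables y t with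
      | (t', None) => ((m, s) :: t', None)
      | (t', Some z) =>
          if Bool.eqb z s then ((m + 1, s) :: t', None) else ((m, s) :: t', Some (negb z))
      end
  end.

Definition nf_lmul (y : bool) (s : nform) : nform :=
  let '(a, b, l) := s in
  match lmul_syllables y l with
  | (l', None) => (a, b, l')
  | (l', Some false) => (a + 1, b, l')
  | (l', Some true) => (a, b + 1, l')
  end.

Lemma nf_lmul_step y s x : nf_lmul y (nf_step s x) = nf_step (nf_lmul y s) x.
Proof.
  destruct s as [[a b] l], x as [[|] [|]].
  1, 2: cbn; destruct (lmul_syllables y l) as [l' [[|]|]]; cbn; try reflexivity;
    now rewrite Z.sub_add, Z.add_simpl_r.
  all: destruct l as [|[m s] t].
  1, 3: destruct y; cbn; case_eqb; cbn; try reflexivity; lia.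
  all: destruct (lmul_syllables y t) as [t' o] eqn:E; destruct o as [[|]|], s;
    repeat progress (cbn; rewrite ?E; case_eqb); reflexivity || lia.
Qed.

Lemma nf_lmul_steps y s w : nf_steps (nf_lmul y s) w = nf_lmul y (nf_steps s w).
Proof.
  revert s. induction w as [|x w IH]; intros s; [reflexivity|].
  cbn. rewrite <- nf_lmul_step. apply IH.
Qed.

Lemma normal_form_wc1_app w : normal_form (wc1 ++ w) = nf_lmul true (normal_form w).
Proof. rewrite normal_form_app. exact (nf_lmul_steps true (0, 0, []) w). Qed.

(** * The centraliser of d *)

Lemma gen_by_app S u v : gen_by S u -> gen_by S v -> gen_by S (u ++ v).
Proof.
  induction 1 as [| s u Hs _ IH | s u Hs _ IH]; intros Hv; [exact Hv| |];
    rewrite <- app_assoc; [apply gen_by_cons | apply gen_by_consinv]; auto.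
Qed.

#[local] Instance in_subgroup_Proper S : Proper (eqG ==> iff) (in_subgroup S).
Proof.
  intros g h Hgh. unfold in_subgroup.
  split; intros [u [Hu Hg]]; exists u; split; auto; now rewrite <- Hg.
Qed.

Lemma in_subgroup_app S u v : in_subgroup S u -> in_subgroup S v -> in_subgroup S (u ++ v).
Proof.
  intros [u' [Hu Hu']] [v' [Hv Hv']]. exists (u' ++ v'). split.
  - now apply gen_by_app.
  - now rewrite Hu', Hv'.
Qed.

Lemma in_subgroup_zpow S s m : In s S -> in_subgroup S (zpow s m).
Proof.
  intros Hs. exists (zpow s m). split; [|reflexivity].
  unfold zpow. destruct (0 <=? m); [generalize (Z.to_nat m) | generalize (Z.to_nat (- m))];
    intros n; induction n as [|n IH]; cbn [wpow]; constructor; assumption.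
Qed.

Definition centraliser_gens : list word := [wc; wc1; wc2].

Lemma lmul_syllables_d_in_subgroup l :
  (forall l', lmul_syllables true l = (l', Some true) ->
     in_subgroup centraliser_gens (word_of_syllables l)) /\
  (forall l', lmul_syllables true l = (l', Some false) ->
     exists h, in_subgroup centraliser_gens h /\ eqG (word_of_syllables l) (h ++ wq)).
Proof.
  induction l as [|[m s] t [IHd IHc]].
  - split; intros l' H; inversion H. exists []. split; [constructor | reflexivity].
  - cbn [lmul_syllables word_of_syllables word_of_syllable].
    destruct (lmul_syllables true t) as [t' [[|]|]] eqn:E, s; cbn;
      split; intros l' H; try discriminate H.
    + exists (word_of_syllables t ++ cpow m). split.
      * apply in_subgroup_app; [now apply (IHd t')|].
        apply in_subgroup_zpow. now left.
      * now rewrite <- app_assoc.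
    + destruct (IHc t' eq_refl) as [h [Hh Ht]].
      rewrite Ht, <- app_assoc. apply in_subgroup_app; [exact Hh|].
      change (in_subgroup centraliser_gens (wq ++ zpow wc1 m ++ winv wq)).
      rewrite <- zpow_conj. apply in_subgroup_zpow. now right; right; left.
Qed.

Lemma centralises_wc1_in_subgroup g : comm g wc1 -> in_subgroup centraliser_gens g.
Proof.
  intros Hg. apply eqG_iff_normal_form in Hg.
  rewrite normal_form_app, normal_form_wc1_app in Hg.
  rewrite <- word_of_normal_form.
  pose proof (normal_form_reduced g) as Hred.
  destruct (normal_form g) as [[a b] l]. cbn [snd] in Hred.
  rewrite nf_steps_wc1 in Hg by exact Hred.
  unfold nf_lmul in Hg.
  (* d must cross all the syllables of g and come out as d *)
  destruct (lmul_syllables true l) as [l' [[|]|]] eqn:E; [|injection Hg; lia ..].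
  apply in_subgroup_app; [exact (proj1 (lmul_syllables_d_in_subgroup l) l' E)|].
  apply in_subgroup_app; apply in_subgroup_zpow; cbn; auto.
Qed.

Lemma generators_commute_wc1 s : In s centraliser_gens -> comm s wc1 /\ comm (winv s) wc1.
Proof.
  intros Hs. unfold comm. rewrite !eqG_iff_normal_form.
  repeat destruct Hs as [<- | Hs]; [..| contradiction]; split; vm_compute; reflexivity.
Qed.

Lemma in_subgroup_comm S g h :
  (forall s, In s S -> comm s h /\ comm (winv s) h) -> in_subgroup S g -> comm g h.
Proof.
  intros HS [u [Hu Hg]]. unfold comm. rewrite Hg. clear g Hg.
  induction Hu as [| s u Hs _ IH | s u Hs _ IH].
  - now rewrite app_nil_r.
  - apply comm_app; [apply HS, Hs | exact IH].
  - apply comm_app; [apply HS, Hs | exact IH].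
Qed.

Theorem mainTheorem10 :
  forall g : word, in_centraliser wc1 g <-> in_subgroup [wc; wc1; wc2] g.
Proof.
  intros g. split.
  - apply centralises_wc1_in_subgroup.
  - apply in_subgroup_comm, generators_commute_wc1.
Qed.
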